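(* Let $a,b,c,d,e,f\in[0,1]$ and $t_j,t_k,t_h\in(0,1)$. With $A_i,B_i,C_i$ as defined below, if $A_i=d^2+e^2+f^2+2def-1>0$, then $\Delta_i:=B_i^2-4A_iC_i>0$.
   Context: $Q_3=2abef+2acdf+2bcde+2abd+2ace+2bcf+2def+a^2+b^2+c^2+d^2+e^2+f^2-a^2f^2-b^2e^2-c^2d^2-1$; $A_i=d^2+e^2+f^2+2def-1$; $B_i=-\big[2t_j((1-f^2)a+bd+ce+bef+cdf)+2t_k((1-e^2)b+ad+cf+aef+cde)+2t_h((1-d^2)c+ae+bf+adf+bde)\big]$; $C_i=-\big[t_j^2(1-b^2-c^2-f^2-2bcf)+t_k^2(1-a^2-c^2-e^2-2ace)+t_h^2(1-a^2-b^2-d^2-2abd)+2t_jt_k((1-c^2)d+ab+ef+acf+bce)+2t_jt_h((1-b^2)e+ac+df+abf+bcd)+2t_kt_h((1-a^2)f+bc+de+abe+acd)+Q_3\big]$. In the paper, $a,\dots,f$ are $\cos\Phi_{ij},\cos\Phi_{ik},\cos\Phi_{ih},\cos\Phi_{jk},\cos\Phi_{jh},\cos\Phi_{kh}$ for weights $\Phi\in[0,\frac\pi2]$ on a truncated tetrahedron $\{ijkh\}$, $t_\nu=\tanh r_\nu$, and $A_it_i^2+B_it_i+C_i=-Q_2$, where $Q_2>0$ characterizes non-degeneracy of the tetrahedron. *)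

From Stdlib Require Import Reals.
Open Scope R_scope.

Definition Q3 (a b c d e f : R) : R :=
  2*a*b*e*f + 2*a*c*d*f + 2*b*c*d*e + 2*a*b*d + 2*a*c*e + 2*b*c*f + 2*d*e*f
  + a^2 + b^2 + c^2 + d^2 + e^2 + f^2 - a^2*f^2 - b^2*e^2 - c^2*d^2 - 1.

Definition Ai (a b c d e f : R) : R := d^2 + e^2 + f^2 + 2*d*e*f - 1.

Definition Bi (a b c d e f tj tk th : R) : R :=
  - (2*tj*((1 - f^2)*a + b*d + c*e + b*e*f + c*d*f)
     + 2*tk*((1 - e^2)*b + a*d + c*f + a*e*f + c*d*e)
     + 2*th*((1 - d^2)*c + a*e + b*f + a*d*f + b*d*e)).

Definition Ci (a b c d e f tj tk th : R) : R :=
  - (tj^2*(1 - b^2 - c^2 - f^2 - 2*b*c*f)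
     + tk^2*(1 - a^2 - c^2 - e^2 - 2*a*c*e)
     + th^2*(1 - a^2 - b^2 - d^2 - 2*a*b*d)
     + 2*tj*tk*((1 - c^2)*d + a*b + e*f + a*c*f + b*c*e)
     + 2*tj*th*((1 - b^2)*e + a*c + d*f + a*b*f + b*c*d)
     + 2*tk*th*((1 - a^2)*f + b*c + d*e + a*b*e + a*c*d)
     + Q3 a b c d e f).

Definition Delta_i (a b c d e f tj tk th : R) : R :=
  (Bi a b c d e f tj tk th)^2 - 4 * Ai a b c d e f * Ci a b c d e f tj tk th.

(* The discriminant factors as Delta_i = 4 (A_i + S(a,b,c)) (A_i + S(t_j,t_k,t_h)),
   where S = S_{d,e,f} is a quadratic form whose coefficients 1 - f^2, ...,
   d + e f, ... are all nonnegative for d, e, f in [0, 1].  Hence S >= 0 on the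
   nonnegative orthant, both factors are at least A_i > 0, and Delta_i > 0. *)
From Stdlib Require Import Reals Lra Psatz.
Open Scope R_scope.

Definition quad_form (d e f x y z : R) : R :=
  (1 - f^2)*x^2 + (1 - e^2)*y^2 + (1 - d^2)*z^2
  + 2*(d + e*f)*x*y + 2*(e + d*f)*x*z + 2*(f + d*e)*y*z.

Lemma quad_form_ge0 (d e f x y z : R) :
  0 <= d <= 1 -> 0 <= e <= 1 -> 0 <= f <= 1 ->
  0 <= x -> 0 <= y -> 0 <= z ->
  0 <= quad_form d e f x y z.
Proof.
  intros Hd He Hf Hx Hy Hz; unfold quad_form.
  assert (0 <= (1 - f^2)*x^2) by (apply Rmult_le_pos; nra).
  assert (0 <= (1 - e^2)*y^2) by (apply Rmult_le_pos; nra).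
  assert (0 <= (1 - d^2)*z^2) by (apply Rmult_le_pos; nra).
  assert (0 <= (d + e*f)*(x*y)) by (apply Rmult_le_pos; nra).
  assert (0 <= (e + d*f)*(x*z)) by (apply Rmult_le_pos; nra).
  assert (0 <= (f + d*e)*(y*z)) by (apply Rmult_le_pos; nra).
  nra.
Qed.

Lemma Delta_i_factor (a b c d e f tj tk th : R) :
  Delta_i a b c d e f tj tk th =
  4 * (Ai a b c d e f + quad_form d e f a b c)
    * (Ai a b c d e f + quad_form d e f tj tk th).
Proof. unfold Delta_i, Bi, Ci, Q3, Ai, quad_form; ring. Qed.

Theorem lemma2p4 (a b c d e f tj tk th : R) :
  0 <= a <= 1 -> 0 <= b <= 1 -> 0 <= c <= 1 ->
  0 <= d <= 1 -> 0 <= e <= 1 -> 0 <= f <= 1 ->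
  0 < tj < 1 -> 0 < tk < 1 -> 0 < th < 1 ->
  Ai a b c d e f > 0 ->
  Delta_i a b c d e f tj tk th > 0.
Proof.
  intros Ha Hb Hc Hd He Hf Hj Hk Hh HA.
  rewrite Delta_i_factor.
  assert (Habc : 0 <= quad_form d e f a b c) by (apply quad_form_ge0; lra).
  assert (Ht : 0 <= quad_form d e f tj tk th) by (apply quad_form_ge0; lra).
  assert (0 < (Ai a b c d e f + quad_form d e f a b c)
              * (Ai a b c d e f + quad_form d e f tj tk th))
    by (apply Rmult_lt_0_compat; lra).
  lra.
Qed.
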